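(* Let $C$ be a normal closed cone with nonempty interior in a real Banach space $X$. Let $f:\operatorname{int} C \to \operatorname{int} C$ be order-preserving and homogeneous, and suppose $f$ has an eigenvector in $\operatorname{int} C$. Let $g(x) = f(x)/\|f(x)\|$ for $x \in \operatorname{int} C$. Then for every $x \in \operatorname{int} C$, the closure of the orbit $\mathcal{O}(x, r_C(f)^{-1} f)$ is compact if and only if the closure of the orbit $\mathcal{O}(x, g)$ is compact.
   Context: A closed cone is a closed convex set $C \subset X$ with $\lambda C \subset C$ for $\lambda \ge 0$ and $C \cap (-C) = \{0\}$; $x\le y$ means $y-x\in C$. $C$ is normal if there is $\kappa > 0$ with $\|x\| \le \kappa \|y\|$ whenever $0 \le x \le y$. $f$ is homogeneous if $f(tx) = t f(x)$ for all $t > 0$. The cone spectral radius is $r_C(f) = \limsup_{k\to\infty} \|f^k(x)\|^{1/k}$ for any $x \in \operatorname{int} C$ (independent of $x$, and positive). The orbit of $x$ under a map $h$ is $\mathcal{O}(x,h) = \{h^k(x): k \in \mathbb{N}\}$. *)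

From HB Require Import structures.
From mathcomp Require Import all_boot all_order all_algebra.
From mathcomp Require Import all_classical all_reals all_analysis.
Set Implicit Arguments. Unset Strict Implicit. Unset Printing Implicit Defensive.
Import Order.TTheory GRing.Theory Num.Theory.
Import numFieldNormedType.Exports.
Local Open Scope classical_set_scope.
Local Open Scope ring_scope.

Section ConeDefs.
Context {R : realType} {X : normedModType R}.

Definition closed_cone (C : set X) : Prop :=
  [/\ closed C,
      (forall x y (t : R), C x -> C y -> 0 <= t -> t <= 1 -> C (t *: x + (1 - t) *: y)),
      (forall x (l : R), C x -> 0 <= l -> C (l *: x)) &
      (forall x, C x -> C (- x) -> x = 0)].

Definition cone_le (C : set X) (x y : X) : Prop := C (y - x).

Definition normal_cone (C : set X) : Prop :=
  exists2 kappa : R, 0 < kappa &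
    forall x y, cone_le C 0 x -> cone_le C x y -> `|x| <= kappa * `|y|.

Definition cone_spectral_radius (f : X -> X) (x : X) : R :=
  fine (limn_esup (fun k : nat => ((`| iter k f x |) `^ (k%:R^-1))%:E)).

Definition cone_orbit (h : X -> X) (x : X) : set X := range (fun k : nat => iter k h x).

End ConeDefs.

From HB Require Import structures.
From mathcomp Require Import all_boot all_order all_algebra.
From mathcomp Require Import all_classical all_reals all_analysis.
From mathcomp Require Import ring.
Set Implicit Arguments. Unset Strict Implicit. Unset Printing Implicit Defensive.
Import Order.TTheory GRing.Theory Num.Theory.
Import numFieldNormedType.Exports.
Local Open Scope classical_set_scope.
Local Open Scope ring_scope.

(* The proof rests on one comparison: every u ∈ int C
   is squeezed between two positive multiples of v, so monotonicity,
   homogeneity and normality of C give constants 0 < A <= B with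
       A l^k <= ||f^k u|| <= B l^k            for all k.
   Consequently
   (1) the cone spectral radius ||f^k u||^(1/k) -> l, i.e. r_C(f) = l;
   (2) the k-th iterates of x under l^-1 f and under g = f/||f|| are
       l^-k f^k x and ||f^k x||^-1 f^k x, hence differ by the scalar
       l^k / ||f^k x||, which stays in a compact interval of (0, +oo).
   Finally, the closure of a sequence is compact iff the closure of any
   rescaling of it by scalars from a compact interval [a, b] ⊂ (0, +oo) is,
   since the latter lies in the continuous image of [a, b] × (closure). *)

Lemma powR_inv_nat_cvg1 (R : realType) (A : R) :
  0 < A -> (fun k : nat => A `^ (k%:R^-1)) @ \oo --> (1 : R).
Proof.
move=> A0; rewrite -cvg_shiftS.
have -> : [sequence A `^ (n.+1%:R^-1)]_n = expR \o (fun k => harmonic k * ln A).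
  by apply/funext => k /=; rewrite /powR gt_eqF.
rewrite -expR0; apply: continuous_cvg; first exact: continuous_expR.
by rewrite -(mul0r (ln A)); apply: cvgMr_tmp; exact: cvg_harmonic.
Qed.

Lemma powR_root_geometric (R : realType) (A l : R) (k : nat) :
  0 < A -> 0 < l -> (0 < k)%N -> (A * l ^+ k) `^ (k%:R^-1) = A `^ (k%:R^-1) * l.
Proof.
move=> A0 l0 k0; rewrite powRM ?exprn_ge0 ?ltW//; congr (_ * _).
by rewrite -powR_mulrn ?ltW// -powRrM mulfV ?powRr1 ?ltW// pnatr_eq0 -lt0n.
Qed.

Lemma limn_esup_root_geometric (R : realType) (s : nat -> R) (A B l : R) :
  0 < A -> 0 < B -> 0 < l -> (forall k, A * l ^+ k <= s k <= B * l ^+ k) ->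
  fine (limn_esup (fun k => (s k `^ (k%:R^-1))%:E)) = l.
Proof.
move=> A0 B0 l0 sAB.
have root_cvg : (fun k => s k `^ (k%:R^-1)) @ \oo --> l.
  apply: (@squeeze_cvgr _ _ _ _ (fun k => A `^ (k%:R^-1) * l)
                                 (fun k => B `^ (k%:R^-1) * l)).
  - near=> k.
    have k0 : (0 < k)%N by near: k; exact: nbhs_infty_gt.
    have /andP[sA sB] := sAB k.
    have Al_ge0 : 0 <= A * l ^+ k by rewrite mulr_ge0 ?exprn_ge0 ?ltW.
    have Bl_ge0 : 0 <= B * l ^+ k by rewrite mulr_ge0 ?exprn_ge0 ?ltW.
    have s_ge0 : 0 <= s k := le_trans Al_ge0 sA.
    rewrite -!powR_root_geometric //.
    by apply/andP; split; apply: ge0_ler_powR; rewrite ?nnegrE ?invr_ge0 ?ler0n.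
  - by rewrite -[X in _ --> X]mul1r; apply: cvgMr_tmp; exact: powR_inv_nat_cvg1.
  - by rewrite -[X in _ --> X]mul1r; apply: cvgMr_tmp; exact: powR_inv_nat_cvg1.
have : (fun k => (s k `^ (k%:R^-1))%:E) @ \oo --> l%:E.
  by apply: cvg_EFin; [exact: nearW | exact: root_cvg].
by move=> ecvg; rewrite is_cvg_limn_esupE ?(cvg_lim _ ecvg)//; apply/cvg_ex; exists l%:E.
Unshelve. all: by end_near.
Qed.

Lemma compact_closure_range_scale (R : realType) (X : normedModType R)
    (p q : nat -> X) (a b : R) :
  (forall k, exists t, a <= t <= b /\ p k = t *: q k) ->
  compact (closure (range q)) -> compact (closure (range p)).
Proof.
move=> pq Kq.
pose S := [set z.1 *: z.2 | z in ((`[a, b] : set R^o) `*` closure (range q))].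
have cS : compact S.
  apply: continuous_compact; last exact: compact_setX (@segment_compact R a b) Kq.
  by apply: continuous_subspaceT => z; exact: scale_continuous.
apply: (subclosed_compact _ cS); first exact: closed_closure.
rewrite (closure_id S).1; last exact: compact_closed (@norm_hausdorff _ _) cS.
apply: closureS => _ [k _ <-].
have [t [tab ->]] := pq k.
by exists (t, q k) => //; split => //=; apply: subset_closure; exists k.
Qed.

(* For a segment [a, b] ⊂ (0, +oo) the inverse scalars lie in [1/b, 1/a],
   so the rescaling preserves compactness in both directions. *)
Lemma compact_closure_range_scale_iff (R : realType) (X : normedModType R)
    (p q : nat -> X) (a b : R) :
  0 < a -> (forall k, exists t, a <= t <= b /\ p k = t *: q k) ->
  compact (closure (range q)) <-> compact (closure (range p)).
Proof.
move=> a0 pq; split; first exact: compact_closure_range_scale pq.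
apply: (@compact_closure_range_scale _ _ _ _ b^-1 a^-1) => k.
have [t [/andP[ta tb] ->]] := pq k.
have t0 : 0 < t by exact: lt_le_trans ta.
exists t^-1; split; last by rewrite scalerA mulVf ?gt_eqF // scale1r.
by rewrite !lef_pV2 ?posrE ?ta ?tb // (lt_le_trans a0) // (le_trans ta).
Qed.

Lemma ratio_bounds (R : realFieldType) (A B L N : R) :
  0 < A -> 0 < L -> A * L <= N <= B * L -> B^-1 <= L / N <= A^-1.
Proof.
move=> A0 L0 /andP[ALN NBL].
have N0 : 0 < N by apply: lt_le_trans ALN; exact: mulr_gt0.
have B0 : 0 < B by rewrite -(pmulr_lgt0 _ L0); exact: lt_le_trans NBL.
apply/andP; split; first by rewrite ler_pdivlMr // mulrC ler_pdivrMr // mulrC.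
by rewrite ler_pdivrMr // -(ler_pM2l A0) mulrA mulfV ?gt_eqF // mul1r.
Qed.

Section ConeInterior.
Context {R : realType} {X : normedModType R} (C : set X).
Hypothesis cone_C : closed_cone C.

Lemma coneZ x (t : R) : C x -> 0 <= t -> C (t *: x).
Proof. by case: cone_C => _ _ scaleC _; apply: scaleC. Qed.

Lemma interior_ballP x :
  interior C x <-> exists2 e : R, 0 < e & forall y, `|x - y| < e -> C y.
Proof.
split; first by move=> /nbhs_ballP[e e0 eC]; exists e => // y xy; apply: eC; rewrite -ball_normE.
by move=> [e e0 eC]; apply/nbhs_ballP; exists e => // y; rewrite -ball_normE; exact: eC.
Qed.

Lemma interior_dominates p q : interior C p -> exists2 s : R, 0 < s & C (p - s *: q).
Proof.
move=> /interior_ballP[e e0 eC]; have q1_gt0 : 0 < `|q| + 1 by rewrite ltr_wpDl.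
exists (e / (`|q| + 1)); first by rewrite divr_gt0.
apply: eC; rewrite opprB addrC subrK normrZ ger0_norm ?divr_ge0 ?ltW //.
by rewrite -mulrA gtr_pMr // mulrC ltr_pdivrMr ?mul1r ?ltrDl.
Qed.

Lemma interiorZ x (t : R) : interior C x -> 0 < t -> interior C (t *: x).
Proof.
move=> /interior_ballP[e e0 eC] t0; apply/interior_ballP.
exists (t * e); first exact: mulr_gt0.
move=> y ty; rewrite -[y](scalerKV (lt0r_neq0 t0)); apply: coneZ; last exact: ltW.
apply: eC; rewrite -[x](scalerK (lt0r_neq0 t0)) -scalerBr normrZ gtr0_norm ?invr_gt0 //.
by rewrite mulrC ltr_pdivrMr // mulrC.
Qed.

Variable f : X -> X.
Hypothesis f_interior : forall x, interior C x -> interior C (f x).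
Hypothesis f_mono : forall x y, interior C x -> interior C y ->
  cone_le C x y -> cone_le C (f x) (f y).
Hypothesis f_hom : forall x (t : R), interior C x -> 0 < t -> f (t *: x) = t *: f x.

Lemma iter_interior k x : interior C x -> interior C (iter k f x).
Proof. by move=> xC; elim: k => //= k IH; apply: f_interior. Qed.

Lemma iter_hom k x t : interior C x -> 0 < t -> iter k f (t *: x) = t *: iter k f x.
Proof. by move=> xC t0; elim: k => //= k ->; rewrite f_hom //; exact: iter_interior. Qed.

Lemma iter_mono k x y : interior C x -> interior C y -> cone_le C x y ->
  cone_le C (iter k f x) (iter k f y).
Proof. by move=> xC yC xy; elim: k => //= k IH; apply: f_mono => //; apply: iter_interior. Qed.

Lemma iter_scaled_map (c : R) k x : 0 < c -> interior C x ->
  iter k (fun y => c *: f y) x = c ^+ k *: iter k f x.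
Proof.
move=> c0 xC; elim: k => [|k /= ->]; first by rewrite scale1r.
rewrite f_hom ?exprn_gt0 //; last exact: iter_interior.
by rewrite scalerA exprS.
Qed.

Lemma iter_normalized_map k x : interior C x -> (forall j, 0 < `|iter j f x|) ->
  iter k.+1 (fun y => `|f y|^-1 *: f y) x = `|iter k.+1 f x|^-1 *: iter k.+1 f x.
Proof.
move=> xC fx_gt0; elim: k => [|k IH] //.
rewrite iterS IH f_hom ?invr_gt0 //; last exact: iter_interior.
rewrite normrZ gtr0_norm ?invr_gt0 // scalerA invfM invrK mulrAC.
by rewrite mulfV ?gt_eqF // mul1r.
Qed.

Variables (v : X) (l : R).
Hypotheses (v_interior : interior C v) (v_neq0 : v != 0) (fv : f v = l *: v).

(* The eigenvalue of an interior eigenvector is positive: otherwise f v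
   would be -|l| v, which cannot be an interior point of a pointed cone. *)
Lemma eigenvalue_gt0 : 0 < l.
Proof.
case: cone_C => _ _ scaleC pointedC; have Cv := interior_subset v_interior.
have v_not_opp : ~ C (- v) by move=> /(pointedC _ Cv)/eqP; rewrite (negbTE v_neq0).
case: (ltgtP l 0) => // [l_lt0|l_eq0]; apply: False_ind; apply: v_not_opp.
  have := scaleC _ (- l^-1) (interior_subset (f_interior v_interior)).
  rewrite fv scalerA mulNr mulVf ?lt_eqF // scaleN1r; apply.
  by rewrite oppr_ge0 invr_le0 ltW.
have := f_interior v_interior; rewrite fv l_eq0 scale0r.
move=> /(interior_dominates v)[s s0]; rewrite sub0r => C_msv.
have sv0 : s *: v = 0 by apply: pointedC; [apply: scaleC => //; exact: ltW | rewrite -scaleNr scaleNr].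
by move/eqP: sv0; rewrite scaler_eq0 gt_eqF //= (negbTE v_neq0).
Qed.

Lemma iter_eigenvector k : iter k f v = l ^+ k *: v.
Proof.
elim: k => [|k /= ->]; first by rewrite scale1r.
by rewrite f_hom ?exprn_gt0 ?eigenvalue_gt0 // fv scalerA exprSr.
Qed.

Lemma interior_comparable u : interior C u -> exists a b : R,
  [/\ 0 < a, 0 < b, cone_le C (a *: v) u & cone_le C u (b *: v)].
Proof.
move=> uC; have [a a0 av_le_u] := interior_dominates v uC.
have [s s0 su_le_v] := interior_dominates u v_interior.
exists a, s^-1; split; rewrite ?invr_gt0 // /cone_le.
rewrite -[u](scalerK (lt0r_neq0 s0)) -scalerBr.
by apply: coneZ; rewrite ?invr_ge0 ?ltW.
Qed.

Hypothesis normal_C : normal_cone C.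

Lemma iter_norm_geometric u : interior C u -> exists A B : R,
  [/\ 0 < A, 0 < B & forall k, A * l ^+ k <= `|iter k f u| <= B * l ^+ k].
Proof.
move=> uC; have [a [b [a0 b0 av_le_u u_le_bv]]] := interior_comparable uC.
case: normal_C => kap kap0 normalC.
have v_gt0 : 0 < `|v| by rewrite normr_gt0.
have lk_gt0 k : 0 < l ^+ k by rewrite exprn_gt0 ?eigenvalue_gt0.
have iter_lower k : cone_le C ((a * l ^+ k) *: v) (iter k f u).
  have := iter_mono k (interiorZ v_interior a0) uC av_le_u.
  by rewrite iter_hom // iter_eigenvector scalerA mulrC.
have iter_upper k : cone_le C (iter k f u) ((b * l ^+ k) *: v).
  have := iter_mono k uC (interiorZ v_interior b0) u_le_bv.
  by rewrite iter_hom // iter_eigenvector scalerA mulrC.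
have al_ge0 k : 0 <= a * l ^+ k by exact: ltW (mulr_gt0 a0 (lk_gt0 k)).
have bl_ge0 k : 0 <= b * l ^+ k by exact: ltW (mulr_gt0 b0 (lk_gt0 k)).
have lower_ge0 k : cone_le C 0 ((a * l ^+ k) *: v).
  by rewrite /cone_le subr0; apply: coneZ; [exact: interior_subset v_interior | exact: al_ge0].
exists (a * `|v| / kap), (kap * b * `|v|); split=> [||k]; rewrite ?mulr_gt0 ?invr_gt0 //.
apply/andP; split.
- have := normalC _ _ (lower_ge0 k) (iter_lower k).
  rewrite normrZ ger0_norm // => le_norm.
  rewrite -(ler_pM2l kap0); apply: le_trans le_norm.
  have -> : kap * (a * `|v| / kap * l ^+ k) = a * l ^+ k * `|v|.
    by field; exact: lt0r_neq0.
  by [].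
- have iter_ge0 : cone_le C 0 (iter k f u).
    by rewrite /cone_le subr0; apply: interior_subset; exact: iter_interior.
  apply: le_trans (normalC _ _ iter_ge0 (iter_upper k)) _.
  rewrite normrZ ger0_norm //.
  by have -> : kap * (b * l ^+ k * `|v|) = kap * b * `|v| * l ^+ k by ring.
Qed.

Lemma cone_spectral_radius_eigenvalue u : interior C u -> cone_spectral_radius f u = l.
Proof.
move=> uC; have [A [B [A0 B0 normAB]]] := iter_norm_geometric uC.
exact: limn_esup_root_geometric A0 B0 eigenvalue_gt0 normAB.
Qed.

End ConeInterior.

Theorem mainTheorem4 (R : realType) (X : completeNormedModType R)
    (C : set X) (f : X -> X) :
  closed_cone C -> normal_cone C -> interior C !=set0 ->
  (forall x, interior C x -> interior C (f x)) ->
  (forall x y, interior C x -> interior C y -> cone_le C x y -> cone_le C (f x) (f y)) ->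
  (forall x (t : R), interior C x -> 0 < t -> f (t *: x) = t *: f x) ->
  (exists v, exists l : R, [/\ interior C v, v != 0 & f v = l *: v]) ->
  forall u x, interior C u -> interior C x ->
    (compact (closure (cone_orbit (fun y : X => (cone_spectral_radius f u)^-1 *: f y) x))
     <-> compact (closure (cone_orbit (fun y : X => (`|f y|)^-1 *: f y) x))).
Proof.
move=> cC nC _ fC fmono fhom [v [l [vC v0 fv]]] u x uC xC.
have l0 := eigenvalue_gt0 cC fC vC v0 fv.
rewrite (cone_spectral_radius_eigenvalue cC fC fmono fhom vC v0 fv nC uC).
have [A [B [A0 B0 normAB]]] := iter_norm_geometric cC fC fmono fhom vC v0 fv nC xC.
have fx_gt0 k : 0 < `|iter k f x|.
  by apply: lt_le_trans (andP (normAB k)).1; rewrite mulr_gt0 ?exprn_gt0.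
(* both orbits are rescalings of each other by l^k / ||f^k x|| ∈ [1/B, 1/A] *)
apply: (@compact_closure_range_scale_iff _ _ _ _ (Num.min 1 B^-1) (Num.max 1 A^-1)).
  by rewrite lt_min ltr01 invr_gt0.
case=> [|k].
  by exists 1; rewrite /= scale1r ge_min lexx le_max lexx.
exists (l ^+ k.+1 / `|iter k.+1 f x|); split.
  have /andP[lo hi] := ratio_bounds A0 (exprn_gt0 k.+1 l0) (normAB k.+1).
  by rewrite ge_min lo orbT le_max hi orbT.
rewrite (iter_normalized_map fC fhom _ xC fx_gt0).
rewrite (@iter_scaled_map _ _ C f fC fhom l^-1) ?invr_gt0 //.
by rewrite exprVn scalerA mulrAC mulfV ?gt_eqF ?exprn_gt0 // mul1r.
Qed.
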